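(* Let $\{E_i:i\in\Lambda\}$ be a family of commuting projections in a $C^*$-algebra, let $\mathcal A:=C^*(\{E_i:i\in\Lambda\})$, and let $X$ be the spectrum of $\mathcal A$, identifying $\mathcal A$ with $C_0(X)$ via the Gelfand transform. Then $C_0(X;\mathbb Z)$ equals the ring generated by $\{E_i:i\in\Lambda\}$. If moreover the family $\{E_i\}$ is closed under multiplication, then $C_0(X;\mathbb Z)=\operatorname{span}_{\mathbb Z}\{E_i:i\in\Lambda\}$.
   Context: $C_0(X;\mathbb Z)$ denotes the continuous integer-valued functions on $X$ vanishing at infinity. The ring generated by the $E_i$ means the (not necessarily unital) subring generated by them. *)

From HB Require Import structures.
From mathcomp Require Import all_boot all_order all_algebra.
From mathcomp Require Import reals.
From mathcomp.real_closed Require Import complex.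
Set Implicit Arguments. Unset Strict Implicit. Unset Printing Implicit Defensive.
Import Order.TTheory GRing.Theory Num.Theory.
Local Open Scope ring_scope.

Record is_Cstar_algebra (R : realType) (A : lmodType R[i])
    (mul : A -> A -> A) (st : A -> A) (nrm : A -> R) : Prop := {
  cs_mulA : forall a b c, mul a (mul b c) = mul (mul a b) c;
  cs_mulDl : forall a b c, mul (a + b) c = mul a c + mul b c;
  cs_mulDr : forall a b c, mul a (b + c) = mul a b + mul a c;
  cs_mulZl : forall (k : R[i]) a b, mul (k *: a) b = k *: mul a b;
  cs_mulZr : forall (k : R[i]) a b, mul a (k *: b) = k *: mul a b;
  cs_stK : forall a, st (st a) = a;
  cs_stD : forall a b, st (a + b) = st a + st b;
  cs_stZ : forall (k : R[i]) a, st (k *: a) = k^* *: st a;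
  cs_stM : forall a b, st (mul a b) = mul (st b) (st a);
  cs_nrm_eq0 : forall a, nrm a = 0 -> a = 0;
  cs_nrmD : forall a b, nrm (a + b) <= nrm a + nrm b;
  cs_nrmZ : forall (k : R[i]) a, ((nrm (k *: a))%:C)%C = `|k| * ((nrm a)%:C)%C;
  cs_nrmM : forall a b, nrm (mul a b) <= nrm a * nrm b;
  cs_Cstar : forall a, nrm (mul (st a) a) = nrm a ^+ 2;
  cs_complete : forall u : nat -> A,
    (forall e : R, 0 < e -> exists N : nat, forall m n : nat,
        (N <= m)%N -> (N <= n)%N -> nrm (u m - u n) < e) ->
    exists l : A, forall e : R, 0 < e -> exists N : nat, forall n : nat,
        (N <= n)%N -> nrm (u n - l) < e
}.

Definition Cstar_gen (R : realType) (A : lmodType R[i])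
    (mul : A -> A -> A) (st : A -> A) (nrm : A -> R)
    (I : Type) (E : I -> A) (a : A) : Prop :=
  forall S : A -> Prop,
    (forall i, S (E i)) ->
    S 0 ->
    (forall x y, S x -> S y -> S (x + y)) ->
    (forall (k : R[i]) x, S x -> S (k *: x)) ->
    (forall x y, S x -> S y -> S (mul x y)) ->
    (forall x, S x -> S (st x)) ->
    (forall x, (forall e : R, 0 < e -> exists y, S y /\ nrm (x - y) < e) -> S x) ->
    S a.

(* Characters of the subalgebra B (= points of the Gelfand spectrum of B):
   nonzero multiplicative linear functionals on B. *)
Definition is_character (R : realType) (A : lmodType R[i])
    (mul : A -> A -> A) (B : A -> Prop) (phi : A -> R[i]) : Prop :=
  [/\ forall a b, B a -> B b -> phi (a + b) = phi a + phi b,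
      forall (k : R[i]) a, B a -> phi (k *: a) = k * phi a,
      forall a b, B a -> B b -> phi (mul a b) = phi a * phi b
    & exists a, B a /\ phi a <> 0].

Inductive ring_gen (R : realType) (A : lmodType R[i])
    (mul : A -> A -> A) (I : Type) (E : I -> A) : A -> Prop :=
  | rg_gen i : ring_gen mul E (E i)
  | rg_0 : ring_gen mul E 0
  | rg_opp x : ring_gen mul E x -> ring_gen mul E (- x)
  | rg_add x y : ring_gen mul E x -> ring_gen mul E y -> ring_gen mul E (x + y)
  | rg_mul x y : ring_gen mul E x -> ring_gen mul E y -> ring_gen mul E (mul x y).

Definition Zspan (R : realType) (A : lmodType R[i]) (I : Type) (E : I -> A)
    (a : A) : Prop :=
  exists s : seq (int * I), a = \sum_(p <- s) (E p.2 *~ p.1).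

(* C_0(X; Z), viewed inside A = C*({E_i}) via the Gelfand transform:
   the elements a of C*({E_i}) whose Gelfand transform  phi |-> phi a
   takes only integer values on the spectrum X. *)
Definition C0_int (R : realType) (A : lmodType R[i])
    (mul : A -> A -> A) (st : A -> A) (nrm : A -> R)
    (I : Type) (E : I -> A) (a : A) : Prop :=
  Cstar_gen mul st nrm E a /\
  forall phi : A -> R[i], is_character mul (Cstar_gen mul st nrm E) phi ->
    exists z : int, phi a = z%:~R.

From HB Require Import structures.
From mathcomp Require Import all_boot all_order all_algebra.
From mathcomp Require Import reals.
From mathcomp.real_closed Require Import complex.
From mathcomp Require Import boolp classical_sets.
From mathcomp Require Import ring lra.
Import Order.TTheory GRing.Theory Num.Theory.
Local Open Scope ring_scope.
Local Open Scope complex_scope.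

Set Implicit Arguments. Unset Strict Implicit. Unset Printing Implicit Defensive.

(* For finitely many indices F the
   products over F of E_i or 1 - E_i (the atoms of F) are pairwise orthogonal
   projections, every polynomial in the E_i, i in F, is a combination of atoms,
   and such a combination has norm at most the largest modulus of a coefficient
   on a nonzero atom.  A nonzero projection x0 commuting with the E_i (e.g. a
   nonzero atom) supports a character: by Zorn's lemma choose, for every i, one
   of E_i or 1 - E_i so that no finite product of the choices kills x0; every
   polynomial then acts on such a product as a scalar, and this eigenvalue
   extends by McShane's formula to a 2-Lipschitz character of C*(E_i).
   If a has integer Gelfand transform, approximate it within 1/8 by a
   combination of atoms.  Evaluating characters shows that every coefficient is
   within 1/4 of an integer; rounding gives r in the ring generated by the E_i
   with |a - r| < 1/2.  Each character is then an integer of modulus < 1, i.e. 0,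
   at a - r, and as characters determine the coefficients of combinations of
   atoms near a - r, a - r = 0.  When the E_i are closed under products, that
   ring is their Z-span. *)

Section Scalars.
Variable R : realType.
Local Notation normc := (@Normc.normc R).
Implicit Types z w : R[i].

Lemma normc_ge0 z : 0 <= normc z.
Proof. by case: z => a b; rewrite /Normc.normc sqrtr_ge0. Qed.

Lemma normc_real (r : R) : 0 <= r -> normc r%:C = r.
Proof. by move=> r0; rewrite /Normc.normc /= expr0n /= addr0 sqrtr_sqr ger0_norm. Qed.

Lemma conjc_mul_normc z : z^* * z = (normc z ^+ 2)%:C.
Proof.
case: z => a b; rewrite /Normc.normc sqr_sqrtr ?addr_ge0 ?sqr_ge0 //.
by apply/eqP; rewrite eq_complex /=; apply/andP; split; apply/eqP; ring.
Qed.

Lemma normc_unit_circle (t : R) : 0 <= t <= 1 ->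
  normc (t +i* Num.sqrt (1 - t ^+ 2)) = 1.
Proof.
move=> /andP[t0 t1]; rewrite /Normc.normc sqr_sqrtr; last by nra.
by rewrite addrC subrK sqrtr1.
Qed.

Lemma normc_le_Re_Im (a b : R) : normc (a +i* b) <= `|a| + `|b|.
Proof.
rewrite /Normc.normc -[X in _ <= X]ger0_norm ?addr_ge0 // -sqrtr_sqr.
apply: ler_wsqrtr; rewrite -(real_normK (num_real a)) -(real_normK (num_real b)) sqrrD.
by have := mulr_ge0 (normr_ge0 a) (normr_ge0 b); lra.
Qed.

Lemma Re_le_normc z : complex.Re z <= normc z.
Proof.
case: z => a b /=; rewrite /Normc.normc; apply: (le_trans (ler_norm a)).
by rewrite -sqrtr_sqr; apply: ler_wsqrtr; have := sqr_ge0 b; lra.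
Qed.

Lemma Im_le_normc z : complex.Im z <= normc z.
Proof.
case: z => a b /=; rewrite /Normc.normc; apply: (le_trans (ler_norm b)).
by rewrite -sqrtr_sqr; apply: ler_wsqrtr; have := sqr_ge0 a; lra.
Qed.

Lemma ReB z w : complex.Re (z - w) = complex.Re z - complex.Re w.
Proof. by case: z; case: w. Qed.

Lemma ImB z w : complex.Im (z - w) = complex.Im z - complex.Im w.
Proof. by case: z; case: w. Qed.

Lemma normcB_le z w : normc (z - w) <= normc z + normc w.
Proof. by apply: (le_trans (le_normcD _ _)); rewrite normcN. Qed.

Lemma normc_int_ge1 (n : int) : n != 0 -> 1 <= normc n%:~R.
Proof.
move=> n0; rewrite -(rmorph_int (real_complex R)) /Normc.normc /= expr0n /= addr0.
by rewrite sqrtr_sqr -intr_norm ler1z -gtz0_ge1 normr_gt0.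
Qed.

Lemma mul_le_of_lt_div (a d e : R) : 0 <= a -> 0 <= d -> d < e / (a + 1) -> a * d <= e.
Proof. by move=> a0 d0; rewrite ltr_pdivlMr ?ltr_wpDl //; nra. Qed.

Lemma normc_eq0_le z : (forall e : R, 0 < e -> normc z <= e) -> z = 0.
Proof.
move=> small; apply: Normc.eq0_normc; apply/eqP; rewrite eq_le normc_ge0 andbT.
rewrite leNgt; apply/negP => z0.
by have := small _ (divr_gt0 z0 (ltr0n _ 2)); lra.
Qed.

End Scalars.

Section CstarAlgebra.
Variables (R : realType) (A : lmodType R[i]) (mul : A -> A -> A) (st : A -> A)
  (nrm : A -> R).
Hypothesis HA : is_Cstar_algebra mul st nrm.
Local Notation "x ** y" := (mul x y) (at level 40, left associativity).
Local Notation normc := (@Normc.normc R).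
Implicit Types x y z : A.

Lemma mulmA x y z : x ** (y ** z) = x ** y ** z. Proof. exact: (cs_mulA HA). Qed.
Lemma mulmDl x y z : (x + y) ** z = x ** z + y ** z. Proof. exact: (cs_mulDl HA). Qed.
Lemma mulmDr x y z : z ** (x + y) = z ** x + z ** y. Proof. exact: (cs_mulDr HA). Qed.
Lemma mulmZl k x y : (k *: x) ** y = k *: (x ** y). Proof. exact: (cs_mulZl HA). Qed.
Lemma mulmZr k x y : x ** (k *: y) = k *: (x ** y). Proof. exact: (cs_mulZr HA). Qed.

Lemma mul0m x : 0 ** x = 0.
Proof. by rewrite -[X in X ** _](scale0r (0 : A)) mulmZl scale0r. Qed.
Lemma mulm0 x : x ** 0 = 0.
Proof. by rewrite -[X in _ ** X](scale0r (0 : A)) mulmZr scale0r. Qed.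
Lemma mulNm x y : (- x) ** y = - (x ** y).
Proof. by rewrite -scaleN1r mulmZl scaleN1r. Qed.
Lemma mulmN x y : x ** (- y) = - (x ** y).
Proof. by rewrite -scaleN1r mulmZr scaleN1r. Qed.
Lemma mulmBl x y z : (x - y) ** z = x ** z - y ** z.
Proof. by rewrite mulmDl mulNm. Qed.
Lemma mulmBr x y z : z ** (x - y) = z ** x - z ** y.
Proof. by rewrite mulmDr mulmN. Qed.

Lemma mulm_suml (T : Type) (s : seq T) (f : T -> A) y :
  (\sum_(t <- s) f t) ** y = \sum_(t <- s) f t ** y.
Proof. by apply: (big_morph (mul^~ y)) => [a b|]; rewrite ?mulmDl ?mul0m. Qed.
Lemma mulm_sumr (T : Type) (s : seq T) (f : T -> A) y :
  y ** (\sum_(t <- s) f t) = \sum_(t <- s) y ** f t.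
Proof. by apply: (big_morph (mul y)) => [a b|]; rewrite ?mulmDr ?mulm0. Qed.

Lemma stK : involutive st. Proof. exact: (cs_stK HA). Qed.
Lemma stD x y : st (x + y) = st x + st y. Proof. exact: (cs_stD HA). Qed.
Lemma stZ k x : st (k *: x) = k^* *: st x. Proof. exact: (cs_stZ HA). Qed.
Lemma stM x y : st (x ** y) = st y ** st x. Proof. exact: (cs_stM HA). Qed.
Lemma st0 : st 0 = 0.
Proof. by rewrite -[X in st X](scale0r (0 : A)) stZ raddf0 scale0r. Qed.
Lemma stN x : st (- x) = - st x.
Proof. by rewrite -scaleN1r stZ rmorphN1 scaleN1r. Qed.
Lemma stB x y : st (x - y) = st x - st y.
Proof. by rewrite stD stN. Qed.
Lemma st_sum (T : Type) (s : seq T) (f : T -> A) :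
  st (\sum_(t <- s) f t) = \sum_(t <- s) st (f t).
Proof. by apply: (big_morph st) => [a b|]; rewrite ?stD ?st0. Qed.

Lemma nrmZ k x : nrm (k *: x) = normc k * nrm x.
Proof. by apply: complexI; rewrite rmorphM /= (cs_nrmZ HA). Qed.
Lemma nrmD x y : nrm (x + y) <= nrm x + nrm y. Proof. exact: (cs_nrmD HA). Qed.
Lemma nrmM x y : nrm (x ** y) <= nrm x * nrm y. Proof. exact: (cs_nrmM HA). Qed.
Lemma nrm_eq0 x : nrm x = 0 -> x = 0. Proof. exact: (cs_nrm_eq0 HA). Qed.
Lemma nrm_Cstar x : nrm (st x ** x) = nrm x ^+ 2. Proof. exact: (cs_Cstar HA). Qed.

Lemma nrm0 : nrm 0 = 0.
Proof. by rewrite -[X in nrm X](scale0r (0 : A)) nrmZ Normc.normc0 mul0r. Qed.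
Lemma nrmN x : nrm (- x) = nrm x.
Proof. by rewrite -scaleN1r nrmZ normcN Normc.normc1 mul1r. Qed.
Lemma nrm_ge0 x : 0 <= nrm x.
Proof. by have := nrmD x (- x); rewrite subrr nrm0 nrmN; lra. Qed.
Lemma nrm_distC x y : nrm (x - y) = nrm (y - x).
Proof. by rewrite -nrmN opprB. Qed.
Lemma nrm_distD x y z : nrm (x - z) <= nrm (x - y) + nrm (y - z).
Proof. by rewrite -[x - z](subrKA y); apply: nrmD. Qed.
Lemma nrm_distDD x x' y y' : nrm (x + x' - (y + y')) <= nrm (x - y) + nrm (x' - y').
Proof. by rewrite opprD addrACA; apply: nrmD. Qed.
Lemma nrm_distM x x' y y' :
  nrm (x ** x' - y ** y') <= nrm x * nrm (x' - y') + nrm (x - y) * nrm y'.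
Proof.
have -> : x ** x' - y ** y' = x ** (x' - y') + (x - y) ** y'.
  by rewrite mulmBr mulmBl addrA subrK.
by apply: (le_trans (nrmD _ _)); apply: lerD; apply: nrmM.
Qed.

Lemma nrm_st x : nrm (st x) = nrm x.
Proof.
suff le_st y : nrm y <= nrm (st y) by apply/eqP; rewrite eq_le le_st -{2}(stK x) le_st.
have [->|y0] := eqVneq (nrm y) 0; first exact: nrm_ge0.
have ypos : 0 < nrm y by rewrite lt_def y0 nrm_ge0.
by rewrite -(ler_pM2r ypos) -expr2 -nrm_Cstar nrmM.
Qed.

Section OrthogonalProjections.
Variables (T : eqType) (s : seq T) (P : T -> A).
Hypotheses (s_uniq : uniq s) (P_id : forall t, t \in s -> P t ** P t = P t)
  (P_st : forall t, t \in s -> st (P t) = P t)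
  (P_orth : forall t t', t \in s -> t' \in s -> t != t' -> P t ** P t' = 0).

Definition comb (d : T -> R[i]) := \sum_(t <- s) d t *: P t.

Lemma eq_comb d d' : {in s, d =1 d'} -> comb d = comb d'.
Proof. by move=> dd'; rewrite /comb !big_seq; apply: eq_bigr => t /dd' ->. Qed.

Lemma combB d d' : comb d - comb d' = comb (fun t => d t - d' t).
Proof. by rewrite /comb -sumrB; apply: eq_bigr => t _; rewrite scalerBl. Qed.

Lemma st_comb d : st (comb d) = comb (fun t => (d t)^*).
Proof. by rewrite /comb st_sum !big_seq; apply: eq_bigr => t ts; rewrite stZ P_st. Qed.

Lemma mul_comb t d : t \in s -> P t ** comb d = d t *: P t.
Proof.
move=> ts; rewrite /comb mulm_sumr (bigD1_seq t) //= mulmZr P_id // big_seq_cond.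
rewrite big1 ?addr0 // => t' /andP[t's t't].
by rewrite mulmZr P_orth ?scaler0 // eq_sym.
Qed.

Lemma mul_combs d d' : comb d ** comb d' = comb (fun t => d t * d' t).
Proof.
rewrite [X in X ** _]/comb mulm_suml [RHS]/comb !big_seq; apply: eq_bigr => t ts.
by rewrite mulmZl mul_comb // scalerA.
Qed.

Lemma nrm_comb_sqr d : nrm (comb d) ^+ 2 = nrm (comb (fun t => (normc (d t) ^+ 2)%:C)).
Proof.
rewrite -nrm_Cstar st_comb mul_combs; congr nrm; apply: eq_comb => t _.
exact: conjc_mul_normc.
Qed.

Lemma nrm_comb_unimodular u : {in s, forall t, normc (u t) = 1} -> nrm (comb u) <= 1.
Proof.
move=> u1; have sqr1 := nrm_comb_sqr (fun=> 1).
rewrite Normc.normc1 expr1n rmorph1 in sqr1.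
have le1 : nrm (comb (fun=> 1)) <= 1 by have := nrm_ge0 (comb (fun=> 1)); nra.
have := nrm_comb_sqr u; rewrite (@eq_comb (fun t => (normc (u t) ^+ 2)%:C) (fun=> 1)).
  by have := nrm_ge0 (comb u); nra.
by move=> t /u1 /= ->; rewrite expr1n.
Qed.

(* A real coefficient t in [0, 1] is the real part of the unimodular number
   t + i sqrt (1 - t^2). *)
Lemma nrm_comb_unit_interval (c : T -> R) : {in s, forall t, 0 <= c t <= 1} ->
  nrm (comb (fun t => (c t)%:C)) <= 1.
Proof.
move=> c01; pose u t := c t +i* Num.sqrt (1 - c t ^+ 2).
have u1 : {in s, forall t, normc (u t) = 1} by move=> t /c01; apply: normc_unit_circle.
have -> : comb (fun t => (c t)%:C) = 2^-1 *: (comb u + st (comb u)).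
  rewrite st_comb /comb -big_split scaler_sumr; apply: eq_bigr => t _ /=.
  rewrite -scalerDl scalerA; congr (_ *: _); apply/eqP.
  by rewrite eq_complex /=; apply/andP; split; apply/eqP; field.
have half : normc 2^-1 = 2^-1.
  by rewrite Normc.normcV -(rmorph_nat (real_complex R)) normc_real.
rewrite nrmZ half; have := nrmD (comb u) (st (comb u)); rewrite nrm_st.
by have := nrm_comb_unimodular u1; have := nrm_ge0 (comb u + st (comb u)); lra.
Qed.

Lemma nrm_comb_le d m : 0 <= m -> {in s, forall t, P t != 0 -> normc (d t) <= m} ->
  nrm (comb d) <= m.
Proof.
move=> m0 dm; pose d' t := if P t == 0 then 0 else d t.
have -> : comb d = comb d'.
  by apply: eq_bigr => t _; rewrite /d'; case: eqP => [->|//]; rewrite !scaler0.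
have d'm : {in s, forall t, normc (d' t) <= m}.
  by move=> t ts; rewrite /d'; case: eqP => [_|/eqP]; [rewrite Normc.normc0|apply: dm].
have [m_eq0|m_gt0] := eqVneq m 0.
  rewrite (@eq_comb _ (fun=> 0)) ?m_eq0; last first.
    move=> t ts; apply: Normc.eq0_normc; apply/eqP; rewrite eq_le normc_ge0 andbT.
    by rewrite -m_eq0 d'm.
  by rewrite /comb big1 ?nrm0 // => t _; rewrite scale0r.
have mpos : 0 < m by rewrite lt_def m_gt0.
pose c t := normc (d' t) ^+ 2 / m ^+ 2.
have c01 : {in s, forall t, 0 <= c t <= 1}.
  move=> t ts; rewrite divr_ge0 ?sqr_ge0 //= ler_pdivrMr ?exprn_gt0 // mul1r.
  by rewrite ler_sqr ?nnegrE ?normc_ge0 ?d'm // ltW.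
have sq := nrm_comb_sqr d'.
have : comb (fun t => (normc (d' t) ^+ 2)%:C) = (m ^+ 2)%:C *: comb (fun t => (c t)%:C).
  rewrite /comb scaler_sumr; apply: eq_bigr => t _; rewrite scalerA -rmorphM /c.
  by rewrite mulrC divfK // expf_neq0.
move=> e; rewrite e nrmZ normc_real ?sqr_ge0 // in sq.
have := nrm_comb_unit_interval c01; have := nrm_ge0 (comb d').
by have := nrm_ge0 (comb (fun t => (c t)%:C)); nra.
Qed.

End OrthogonalProjections.

Section CommutingProjections.
Variables (I : Type) (E : I -> A).
Hypotheses (Eproj : forall i, E i ** E i = E i /\ st (E i) = E i)
  (Ecomm : forall i j, E i ** E j = E j ** E i).

Lemma E_id i : E i ** E i = E i. Proof. by case: (Eproj i). Qed.
Lemma st_E i : st (E i) = E i. Proof. by case: (Eproj i). Qed.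
Lemma mulE_id i x : E i ** (E i ** x) = E i ** x. Proof. by rewrite mulmA E_id. Qed.
Lemma mulEC i j x : E i ** (E j ** x) = E j ** (E i ** x).
Proof. by rewrite !mulmA Ecomm. Qed.

Definition commE x := forall i, E i ** x = x ** E i.

Lemma commE0 : commE 0. Proof. by move=> i; rewrite mul0m mulm0. Qed.
Lemma commED x y : commE x -> commE y -> commE (x + y).
Proof. by move=> cx cy i; rewrite mulmDl mulmDr cx cy. Qed.
Lemma commEZ k x : commE x -> commE (k *: x).
Proof. by move=> cx i; rewrite mulmZl mulmZr cx. Qed.
Lemma commEB x y : commE x -> commE y -> commE (x - y).
Proof. by move=> cx cy i; rewrite mulmBl mulmBr cx cy. Qed.
Lemma commEM x y : commE x -> commE y -> commE (x ** y).
Proof. by move=> cx cy i; rewrite mulmA cx -mulmA cy mulmA. Qed.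
Lemma commE_E j : commE (E j). Proof. by move=> i; rewrite Ecomm. Qed.
Lemma commE_st x : commE x -> commE (st x).
Proof. by move=> cx i; apply: (can_inj stK); rewrite !stM stK st_E cx. Qed.

(* [proj (i, true)] multiplies by E_i and [proj (i, false)] by 1 - E_i, which
   makes sense although the algebra need not have a unit. *)
Definition proj (p : I * bool) x := if p.2 then E p.1 ** x else x - E p.1 ** x.
Definition projs (l : seq (I * bool)) x := foldr proj x l.

Lemma projD p x y : proj p (x + y) = proj p x + proj p y.
Proof. by rewrite /proj; case: p.2; rewrite mulmDr // opprD addrACA. Qed.
Lemma projZ p k x : proj p (k *: x) = k *: proj p x.
Proof. by rewrite /proj; case: p.2; rewrite mulmZr // scalerBr. Qed.
Lemma proj0 p : proj p 0 = 0.
Proof. by rewrite /proj; case: p.2; rewrite mulm0 ?subrr. Qed.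
Lemma proj_mulr p x y : proj p (x ** y) = proj p x ** y.
Proof. by rewrite /proj; case: p.2; rewrite ?mulmBl mulmA. Qed.
Lemma proj_mulE p j x : proj p (E j ** x) = E j ** proj p x.
Proof. by rewrite /proj; case: p.2; rewrite ?mulmBr mulEC. Qed.
Lemma projC p q x : proj p (proj q x) = proj q (proj p x).
Proof.
case: p q => i [] [j []]; rewrite /proj /= ?mulmBr ?[E i ** (E j ** x)]mulEC //.
by rewrite !opprB !addrA [LHS]addrAC [RHS]addrAC (addrAC x (- (E j ** x))).
Qed.
Lemma proj_id p x : proj p (proj p x) = proj p x.
Proof. by case: p => i [] /=; rewrite /proj /= ?mulmBr mulE_id // subrr subr0. Qed.
Lemma proj_orth i b x : proj (i, b) (proj (i, ~~ b) x) = 0.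
Proof. by rewrite /proj; case: b; rewrite /= ?mulmBr mulE_id subrr. Qed.
Lemma proj_split i x : proj (i, true) x + proj (i, false) x = x.
Proof. by rewrite /proj /= addrC subrK. Qed.
Lemma mulE_proj i b x : E i ** proj (i, b) x = if b then proj (i, b) x else 0.
Proof. by rewrite /proj; case: b; rewrite /= ?mulmBr mulE_id ?subrr. Qed.
Lemma commE_proj p x : commE x -> commE (proj p x).
Proof.
by move=> cx; rewrite /proj; case: p.2; [|apply: commEB => //]; apply: commEM => //;
  apply: commE_E.
Qed.
Lemma st_proj p x : commE x -> st (proj p x) = proj p (st x).
Proof.
move=> cx; have cst := commE_st cx.
by rewrite /proj; case: p.2; rewrite ?stB stM st_E cst.
Qed.

Lemma projs_cons p l x : projs (p :: l) x = proj p (projs l x). Proof. by []. Qed.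
Lemma projs_cat l l' x : projs (l ++ l') x = projs l (projs l' x).
Proof. exact: foldr_cat. Qed.
Lemma projsD l x y : projs l (x + y) = projs l x + projs l y.
Proof. by elim: l => //= p l ->; rewrite projD. Qed.
Lemma projsZ l k x : projs l (k *: x) = k *: projs l x.
Proof. by elim: l => //= p l ->; rewrite projZ. Qed.
Lemma projs0 l : projs l 0 = 0.
Proof. by elim: l => //= p l ->; rewrite proj0. Qed.
Lemma projs_mulr l x y : projs l (x ** y) = projs l x ** y.
Proof. by elim: l => //= p l ->; rewrite proj_mulr. Qed.
Lemma projs_mulE l j x : projs l (E j ** x) = E j ** projs l x.
Proof. by elim: l => //= p l ->; rewrite proj_mulE. Qed.
Lemma proj_projs p l x : proj p (projs l x) = projs l (proj p x).
Proof. by elim: l => //= q l <-; rewrite projC. Qed.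
Lemma projsC l l' x : projs l (projs l' x) = projs l' (projs l x).
Proof. by elim: l => //= p l ->; rewrite proj_projs. Qed.
Lemma commE_projs l x : commE x -> commE (projs l x).
Proof. by move=> cx; elim: l => //= p l; apply: commE_proj. Qed.
Lemma st_projs l x : commE x -> st (projs l x) = projs l (st x).
Proof. by move=> cx; elim: l => //= p l IH; rewrite st_proj ?IH //; apply: commE_projs. Qed.
Lemma proj_projs_mem l p x : List.In p l -> proj p (projs l x) = projs l x.
Proof.
elim: l => //= q l IH [->|pl]; first by rewrite proj_id.
by rewrite projC IH.
Qed.
Lemma projs_sub l1 l x : (forall p, List.In p l1 -> List.In p l) ->
  projs l1 (projs l x) = projs l x.
Proof.
elim: l1 => //= p l1 IH l1l; rewrite IH => [|q q1]; last by apply: l1l; right.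
by apply: proj_projs_mem; apply: l1l; left.
Qed.
Lemma mulE_projs l i b x : List.In (i, b) l ->
  E i ** projs l x = if b then projs l x else 0.
Proof. by move=> ibl; rewrite -(proj_projs_mem x ibl) mulE_proj; case: ifP. Qed.
Lemma projs_EE l i j : List.In (i, true) l -> List.In (j, true) l ->
  projs l (E i) = projs l (E j).
Proof.
by move=> il jl; rewrite -(mulE_projs (E i) jl) -projs_mulE Ecomm projs_mulE (mulE_projs _ il).
Qed.

(** * Atoms of finitely many commuting projections *)

Fixpoint sign_patterns n : seq (seq bool) :=
  if n is n'.+1 then
    map (cons true) (sign_patterns n') ++ map (cons false) (sign_patterns n')
  else [:: [::]].

Lemma sign_patternsS n bs : bs \in sign_patterns n.+1 ->
  exists b bs', bs = b :: bs' /\ bs' \in sign_patterns n.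
Proof.
by rewrite /= mem_cat => /orP[] /mapP[bs' bs'n ->]; [exists true, bs'|exists false, bs'].
Qed.

Lemma size_sign_patterns n bs : bs \in sign_patterns n -> size bs = n.
Proof.
elim: n bs => [|n IH] bs; first by rewrite inE => /eqP ->.
by case/sign_patternsS => b [bs' [-> /IH /= ->]].
Qed.

Lemma uniq_sign_patterns n : uniq (sign_patterns n).
Proof.
elim: n => //= n IH; have cons_inj b : injective (@cons bool b) by move=> ? ? [].
rewrite cat_uniq !map_inj_uniq ?IH // andbT; apply/hasPn => _ /mapP[bs _ ->].
by apply/mapP => -[].
Qed.

Lemma projs_partition (F : seq I) x :
  x = \sum_(bs <- sign_patterns (size F)) projs (zip F bs) x.
Proof.
elim: F x => [|i F IH] x /=; first by rewrite big_seq1.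
rewrite big_cat !big_map /= -big_split /= {1}(IH x); apply: eq_bigr => bs _.
by rewrite proj_split.
Qed.

Lemma projs_orth (F : seq I) bs bs' x :
  bs \in sign_patterns (size F) -> bs' \in sign_patterns (size F) -> bs != bs' ->
  projs (zip F bs) (projs (zip F bs') x) = 0.
Proof.
elim: F bs bs' => [|i F IH] bs bs' /=.
  by rewrite !inE => /eqP -> /eqP ->; rewrite eqxx.
case/sign_patternsS => b [cs [-> csF]]; case/sign_patternsS => b' [cs' [-> cs'F]] neq.
rewrite [zip _ _]/= !projs_cons -proj_projs.
have [bb'|/negPf b'b] := eqVneq b b'.
  have neq' : cs != cs' by apply: contraNneq neq => ->; rewrite bb'.
  by rewrite bb' IH // !proj0.
have -> : b' = ~~ b by case: b b' b'b {neq} => -[].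
by rewrite proj_orth.
Qed.

Fixpoint first_true (F : seq I) (bs : seq bool) : option I :=
  match F, bs with
  | i :: F', b :: bs' => if b then Some i else first_true F' bs'
  | _, _ => None
  end.

Lemma first_true_In F bs j : first_true F bs = Some j -> List.In (j, true) (zip F bs).
Proof.
by elim: F bs => [|i F IH] [|[] bs] //= => [[<-]|/IH]; [left|right].
Qed.

Lemma first_true_None F bs : first_true F bs = None ->
  forall i b, List.In (i, b) (zip F bs) -> b = false.
Proof.
by elim: F bs => [|i F IH] [|[] bs] //= /IH none j c [[_ <-]|/none].
Qed.

Lemma zip_In (F : seq I) (bs : seq bool) i : size bs = size F -> List.In i F ->
  exists b, List.In (i, b) (zip F bs).
Proof.
elim: F bs => [|j F IH] [|b bs] //= [/IH sizeF] [<-|/sizeF [c ic]].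
  by exists b; left.
by exists c; right.
Qed.

(* The atom of [bs] is the product over [F] of E_i (sign true) and 1 - E_i
   (sign false), computed by applying the factors to E_j for the first j with
   sign true.  Without a true sign the product would need a unit; it
   annihilates every polynomial in the E_i, i in F, and the atom is taken to
   be 0. *)
Definition atom F bs := if first_true F bs is Some j then projs (zip F bs) (E j) else 0.

Local Notation atoms F := (comb (sign_patterns (size F)) (atom F)).

Lemma commE_atom F bs : commE (atom F bs).
Proof. by rewrite /atom; case: first_true => [j|]; [apply/commE_projs/commE_E|apply: commE0]. Qed.

Lemma atom_id F bs : atom F bs ** atom F bs = atom F bs.
Proof.
rewrite /atom; case: first_true => [j|]; last by rewrite mul0m.
by rewrite -projs_mulr -projs_mulE E_id (projs_sub _ (fun p pl => pl)).
Qed.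

Lemma st_atom F bs : st (atom F bs) = atom F bs.
Proof.
by rewrite /atom; case: first_true => [j|]; [rewrite st_projs ?st_E //; apply: commE_E|apply: st0].
Qed.

Lemma atom_orth F bs bs' : bs \in sign_patterns (size F) ->
  bs' \in sign_patterns (size F) -> bs != bs' -> atom F bs ** atom F bs' = 0.
Proof.
move=> bsF bs'F neq; rewrite /atom.
case: first_true => [j|]; last by rewrite mul0m.
case: first_true => [j'|]; last by rewrite mulm0.
by rewrite -projs_mulr -projs_mulE projs_orth.
Qed.

Lemma nrm_atoms_le F d m : 0 <= m ->
  {in sign_patterns (size F), forall bs, atom F bs != 0 -> normc (d bs) <= m} ->
  nrm (atoms F d) <= m.
Proof.
exact: (nrm_comb_le (uniq_sign_patterns _) (fun bs _ => atom_id F bs)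
  (fun bs _ => st_atom F bs) (@atom_orth F)).
Qed.

Lemma mul_atoms F bs d : bs \in sign_patterns (size F) ->
  atom F bs ** atoms F d = d bs *: atom F bs.
Proof. exact: (mul_comb (uniq_sign_patterns _) (fun bs _ => atom_id F bs) (@atom_orth F)). Qed.

Inductive fin_alg (F : seq I) : A -> Prop :=
  | fin_alg_E i : List.In i F -> fin_alg F (E i)
  | fin_alg0 : fin_alg F 0
  | fin_algD x y : fin_alg F x -> fin_alg F y -> fin_alg F (x + y)
  | fin_algZ k x : fin_alg F x -> fin_alg F (k *: x)
  | fin_algM x y : fin_alg F x -> fin_alg F y -> fin_alg F (x ** y).

Lemma commE_fin_alg F y : fin_alg F y -> commE y.
Proof. by elim=> *; [apply: commE_E|apply: commE0|apply: commED|apply: commEZ|apply: commEM]. Qed.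

Lemma st_fin_alg F y : fin_alg F y -> fin_alg F (st y).
Proof.
elim=> [i Fi||x z _ ? _ ?|k x _ ?|x z _ ? _ ?].
- by rewrite st_E; apply: fin_alg_E.
- by rewrite st0; apply: fin_alg0.
- by rewrite stD; apply: fin_algD.
- by rewrite stZ; apply: fin_algZ.
- by rewrite stM; apply: fin_algM.
Qed.

Lemma fin_alg_sub F G y : (forall i, List.In i F -> List.In i G) ->
  fin_alg F y -> fin_alg G y.
Proof.
move=> FG; elim=> [i /FG||x z _ ? _ ?|k x _ ?|x z _ ? _ ?].
- exact: fin_alg_E.
- exact: fin_alg0.
- exact: fin_algD.
- exact: fin_algZ.
- exact: fin_algM.
Qed.

Lemma projs_fin_alg F bs y : fin_alg F y -> size bs = size F ->
  exists c, projs (zip F bs) y = c *: atom F bs.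
Proof.
move=> Fy sizeF; rewrite /atom; elim: Fy.
- move=> i /(zip_In sizeF) [b ib]; case jF: first_true => [j|]; last first.
    have b0 := first_true_None jF ib; subst b.
    by exists 0; rewrite scale0r -E_id projs_mulE (mulE_projs _ ib).
  case: b ib => ib; last by exists 0; rewrite scale0r -E_id projs_mulE (mulE_projs _ ib).
  by exists 1; rewrite scale1r (projs_EE ib (first_true_In jF)).
- by exists 0; rewrite scale0r projs0.
- by move=> x z _ [c cx] _ [c' cz]; exists (c + c'); rewrite projsD cx cz scalerDl.
- by move=> k x _ [c cx]; exists (k * c); rewrite projsZ cx scalerA.
- move=> x z _ [c cx] Fz [c' cz]; rewrite projs_mulr cx.
  case: first_true cx cz => [j|] _ cz; last by exists 0; rewrite scaler0 mul0m scaler0.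
  exists (c * c'); rewrite mulmZl -projs_mulr (commE_fin_alg Fz) projs_mulr cz mulmZl.
  by rewrite -projs_mulr E_id scalerA.
Qed.

Lemma fin_alg_atoms F y : fin_alg F y -> exists d, y = atoms F d.
Proof.
move=> Fy; have : forall bs, exists c,
    size bs = size F -> projs (zip F bs) y = c *: atom F bs.
  move=> bs; have [sizeF|sizeF] := eqVneq (size bs) (size F).
    by have [c cP] := projs_fin_alg Fy sizeF; exists c.
  by exists 0 => /eqP; rewrite (negPf sizeF).
case/choice => d dP; exists d.
rewrite {1}(projs_partition F y) /comb !big_seq; apply: eq_bigr => bs bsF.
by rewrite dP // (size_sign_patterns bsF).
Qed.

Definition alg x := exists F, fin_alg F x.
Definition near_alg x := forall e : R, 0 < e -> exists2 y, alg y & nrm (x - y) < e.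

Lemma alg2 x y : alg x -> alg y -> exists F, fin_alg F x /\ fin_alg F y.
Proof.
move=> [F Fx] [G Gy]; exists (F ++ G); split.
  by apply: fin_alg_sub Fx => i Fi; apply/List.in_app_iff; left.
by apply: fin_alg_sub Gy => i Gi; apply/List.in_app_iff; right.
Qed.

Lemma alg_E i : alg (E i). Proof. by exists [:: i]; apply: fin_alg_E; left. Qed.
Lemma alg0 : alg 0. Proof. by exists [::]; apply: fin_alg0. Qed.
Lemma algD x y : alg x -> alg y -> alg (x + y).
Proof. by move=> ax ay; have [F [Fx Fy]] := alg2 ax ay; exists F; apply: fin_algD. Qed.
Lemma algZ k x : alg x -> alg (k *: x).
Proof. by move=> [F Fx]; exists F; apply: fin_algZ. Qed.
Lemma algM x y : alg x -> alg y -> alg (x ** y).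
Proof. by move=> ax ay; have [F [Fx Fy]] := alg2 ax ay; exists F; apply: fin_algM. Qed.
Lemma alg_st x : alg x -> alg (st x).
Proof. by move=> [F Fx]; exists F; apply: st_fin_alg. Qed.

Local Notation CE := (Cstar_gen mul st nrm E).

Lemma Cstar_gen_near_alg x : CE x -> near_alg x.
Proof.
apply.
- by move=> i e e0; exists (E i); rewrite ?subrr ?nrm0 //; apply: alg_E.
- by move=> e e0; exists 0; rewrite ?subrr ?nrm0 //; apply: alg0.
- move=> u v nu nv e e0; have e2 : 0 < e / 2 by rewrite divr_gt0.
  have [y ay uy] := nu _ e2; have [z az vz] := nv _ e2.
  exists (y + z); first exact: algD.
  by apply: (le_lt_trans (nrm_distDD _ _ _ _)); lra.
- move=> k u nu e e0; have k0 := normc_ge0 k.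
  have [y ay uy] := nu _ (divr_gt0 e0 (ltr_wpDl k0 ltr01)).
  exists (k *: y); first exact: algZ.
  rewrite -scalerBr nrmZ; have := mul_le_of_lt_div k0 (nrm_ge0 _) uy.
  by move: uy; rewrite ltr_pdivlMr ?ltr_wpDl //; nra.
- move=> u v nu nv e e0; have e2 : 0 < e / 2 by rewrite divr_gt0.
  have u0 := nrm_ge0 u.
  have [z az vz] := nv _ (divr_gt0 e2 (ltr_wpDl u0 ltr01)); have z0 := nrm_ge0 z.
  have [y ay uy] := nu _ (divr_gt0 e2 (ltr_wpDl z0 ltr01)).
  exists (y ** z); first exact: algM.
  apply: (le_lt_trans (nrm_distM _ _ _ _)).
  have := mul_le_of_lt_div u0 (nrm_ge0 _) vz; have := mul_le_of_lt_div z0 (nrm_ge0 _) uy.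
  move: uy vz; rewrite !ltr_pdivlMr ?ltr_wpDl //.
  by have := nrm_ge0 (u - y); have := nrm_ge0 (v - z); nra.
- move=> u nu e e0; have [y ay uy] := nu _ e0.
  by exists (st y); [apply: alg_st|rewrite -stB nrm_st].
- move=> u nu e e0; have e2 : 0 < e / 2 by rewrite divr_gt0.
  have [y [ny uy]] := nu _ e2; have [z az yz] := ny _ e2.
  by exists z => //; apply: (le_lt_trans (nrm_distD u y z)); lra.
Qed.

Lemma Cstar_genD x y : CE x -> CE y -> CE (x + y).
Proof.
move=> Cx Cy S SE S0 SD SZ SM Sst Scl; apply: (SD).
  exact: (Cx S SE S0 SD SZ SM Sst Scl).
exact: (Cy S SE S0 SD SZ SM Sst Scl).
Qed.
Lemma Cstar_genZ k x : CE x -> CE (k *: x).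
Proof. by move=> Cx S SE S0 SD SZ SM Sst Scl; apply/(SZ)/(Cx S SE S0 SD SZ SM Sst Scl). Qed.

Lemma ring_gen_Cstar_gen x : ring_gen mul E x -> CE x.
Proof.
move=> rx S SE S0 SD SZ SM *; elim: rx => // [y _ Sy|y z _ Sy _ Sz|y z _ Sy _ Sz].
- by rewrite -scaleN1r; apply: SZ.
- exact: SD.
- exact: SM.
Qed.

Lemma ring_gen_proj p x : ring_gen mul E x -> ring_gen mul E (proj p x).
Proof.
move=> rx; have rEx := rg_mul (rg_gen mul E p.1) rx.
by rewrite /proj; case: p.2 => //; apply/rg_add/rg_opp.
Qed.

Lemma ring_gen_atom F bs : ring_gen mul E (atom F bs).
Proof.
rewrite /atom; case: first_true => [j|]; last exact: rg_0.
by elim: (zip F bs) => [|p l IH]; [apply: rg_gen|apply: ring_gen_proj].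
Qed.

Lemma ring_gen_mulz x (n : int) : ring_gen mul E x -> ring_gen mul E (x *~ n).
Proof.
move=> rx; have rxn (m : nat) : ring_gen mul E (x *+ m).
  by elim: m => [|m IH]; [rewrite mulr0n; apply: rg_0|rewrite mulrS; apply: rg_add].
by case: n => m; [|rewrite NegzE mulrNz; apply: rg_opp]; rewrite -pmulrn; apply: rxn.
Qed.

Lemma ring_gen_atoms_int F (n : seq bool -> int) :
  ring_gen mul E (atoms F (fun bs => (n bs)%:~R)).
Proof.
rewrite /comb; elim: (sign_patterns _) => [|bs s IH]; first by rewrite big_nil; apply: rg_0.
by rewrite big_cons scaler_int; apply: rg_add => //; apply/ring_gen_mulz/ring_gen_atom.
Qed.

(** * Characters *)

(* The constant 2 comes from extending real and imaginary parts separately. *)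
Definition lip_char (phi : A -> R[i]) :=
  is_character mul CE phi /\ forall x y, normc (phi x - phi y) <= 2 * nrm (x - y).

Section CharacterOfProjection.
Local Open Scope classical_set_scope.
Variable x0 : A.
Hypotheses (x0_neq0 : x0 <> 0) (commE_x0 : commE x0) (x0_id : x0 ** x0 = x0)
  (CE_x0 : CE x0).

Definition lits_in (L : set (I * bool)) (l : seq (I * bool)) :=
  forall p, List.In p l -> L p.
Definition consistent (L : set (I * bool)) := forall l, lits_in L l -> projs l x0 <> 0.

Lemma lits_in_chain (F : set (set (I * bool))) : total_on F subset ->
  forall l, lits_in (\bigcup_(X in F) X) l -> l = [::] \/ exists2 X, F X & lits_in X l.
Proof.
move=> Ftot; elim=> [|p l IH] pl; [by left|right].
have [X1 FX1 X1p] := pl p (or_introl erefl).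
case: (IH (fun q ql => pl q (or_intror ql))) => [->|[X2 FX2 X2l]].
  by exists X1 => // q [<-|[]].
have [X12|X21] := Ftot X1 X2 FX1 FX2.
  by exists X2 => // q [<-|/X2l]; [apply: X12|].
by exists X1 => // q [<-|/X2l/X21].
Qed.

Lemma maximal_consistent_exists :
  exists L, consistent L /\ forall L', L `<` L' -> ~ consistent L'.
Proof.
apply: Zorn_bigcup => F Fcons Ftot l /(lits_in_chain Ftot) [->|[X FX Xl]].
  exact: x0_neq0.
exact: Fcons X FX l Xl.
Qed.

Section Maximal.
Variable L : set (I * bool).
Hypotheses (L_cons : consistent L) (L_max : forall L', L `<` L' -> ~ consistent L').

Lemma lits_inU1 a l x : lits_in (L `|` [set a]) l ->
  exists2 l', lits_in L l' & proj a (projs l' x) = proj a (projs l x).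
Proof.
elim: l => [|p l IH] pl; first by exists [::].
have [l' Ll' eq_l'] := IH (fun q ql => pl q (or_intror ql)).
case: (pl p (or_introl erefl)) => [Lp|/= ->].
  exists (p :: l'); first by move=> q [<-|/Ll'].
  by rewrite !projs_cons [LHS]projC eq_l' projC.
by exists l' => //; rewrite proj_id.
Qed.

Lemma properU1 a : ~ L a -> L `<` L `|` [set a].
Proof. by move=> La; split=> [q Lq|LaL]; [left|apply/La/LaL; right]. Qed.

Lemma maximal_total i : L (i, true) \/ L (i, false).
Proof.
have [|Lt] := pselect (L (i, true)); first by left.
have [|Lf] := pselect (L (i, false)); first by right.
exfalso; apply: (L_max (properU1 Lt)) => l1 l1L proj1.
apply: (L_max (properU1 Lf)) => l2 l2L proj2.
have [l1' L1 e1] := lits_inU1 x0 l1L; have [l2' L2 e2] := lits_inU1 x0 l2L.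
rewrite proj1 proj0 in e1; rewrite proj2 proj0 in e2.
have L12 : lits_in L (l1' ++ l2') by move=> q /List.in_app_iff [/L1|/L2].
apply: (L_cons L12); rewrite -(proj_split i (projs _ x0)) projs_cat.
by rewrite [in X in X + _]projsC proj_projs e1 proj_projs e2 !projs0 addr0.
Qed.

Definition sgn i : bool := `[< L (i, true) >].
Definition sgns (F : seq I) := [seq (i, sgn i) | i <- F].
Definition cell F := projs (sgns F) x0.

Lemma cell_neq0 F : cell F <> 0.
Proof.
apply: L_cons => p /List.in_map_iff [i [<- _]]; rewrite /sgn.
by case: asboolP => // Lt; case: (maximal_total i).
Qed.

Lemma cell_cat F G : cell (F ++ G) = projs (sgns F) (cell G).
Proof. by rewrite /cell /sgns map_cat projs_cat. Qed.

Lemma cell_catC F G : cell (F ++ G) = cell (G ++ F).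
Proof. by rewrite !cell_cat /cell projsC. Qed.

(* The scalar [c] by which [y] acts on a cell will be the value of the
   character at [y]. *)
Definition eigen_at F y c := cell F ** y = c *: cell F.
Definition eigen y c := exists F, eigen_at F y c.

Lemma eigen_at_catl F G y c : eigen_at F y c -> eigen_at (G ++ F) y c.
Proof. by rewrite /eigen_at cell_cat -projs_mulr => ->; rewrite projsZ. Qed.

Lemma eigen2 y c y' c' : eigen y c -> eigen y' c' ->
  exists F, eigen_at F y c /\ eigen_at F y' c'.
Proof.
move=> [F yc] [G y'c']; exists (G ++ F); split; first exact: eigen_at_catl.
by rewrite /eigen_at cell_catC; apply: eigen_at_catl.
Qed.

Lemma eigen_bound y c : eigen y c -> normc c <= nrm y.
Proof.
move=> [F yc]; have := nrmM (cell F) y; rewrite yc nrmZ.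
have cellF : 0 < nrm (cell F).
  by rewrite lt_def nrm_ge0 andbT; apply/eqP => /nrm_eq0; apply: cell_neq0.
by rewrite mulrC ler_pM2l.
Qed.

Lemma eigenD y c y' c' : eigen y c -> eigen y' c' -> eigen (y + y') (c + c').
Proof.
move=> yc y'c'; have [F [e e']] := eigen2 yc y'c'.
by exists F; rewrite /eigen_at mulmDr e e' scalerDl.
Qed.
Lemma eigenZ k y c : eigen y c -> eigen (k *: y) (k * c).
Proof. by move=> [F e]; exists F; rewrite /eigen_at mulmZr e scalerA. Qed.
Lemma eigenM y c y' c' : eigen y c -> eigen y' c' -> eigen (y ** y') (c * c').
Proof.
move=> yc y'c'; have [F [e e']] := eigen2 yc y'c'.
by exists F; rewrite /eigen_at mulmA e mulmZl e' scalerA.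
Qed.
Lemma eigenB y c y' c' : eigen y c -> eigen y' c' -> eigen (y - y') (c - c').
Proof. by move=> yc y'c'; apply: eigenD yc _; rewrite -mulN1r -scaleN1r; apply: eigenZ. Qed.
Lemma eigen0 : eigen 0 0. Proof. by exists [::]; rewrite /eigen_at mulm0 scale0r. Qed.
Lemma eigen_x0 y c : x0 ** y = c *: x0 -> eigen y c. Proof. by exists [::]. Qed.

Lemma eigenE i : eigen (E i) (sgn i)%:R.
Proof.
exists [:: i]; rewrite /eigen_at /cell /= /proj /=; case: (sgn i) => /=.
  by rewrite scale1r -mulmA -commE_x0 mulmA E_id.
by rewrite scale0r mulmBl -mulmA -commE_x0 mulmA E_id commE_x0 subrr.
Qed.

Lemma eigen_alg y : alg y -> exists c, eigen y c.
Proof.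
move=> [F]; elim=> [i _||x z _ [c xc] _ [c' zc']|k x _ [c xc]|x z _ [c xc] _ [c' zc']].
- by exists (sgn i)%:R; apply: eigenE.
- by exists 0; apply: eigen0.
- by exists (c + c'); apply: eigenD.
- by exists (k * c); apply: eigenZ.
- by exists (c * c'); apply: eigenM.
Qed.

Section Extension.
Variable pr : R[i] -> R.
Hypotheses (prB : forall c c', pr (c - c') = pr c - pr c')
  (pr_le : forall c, pr c <= normc c).

(* McShane's formula: the largest 1-Lipschitz extension to [A] of [pr] of
   the eigenvalue. *)
Definition ext_set x := [set r : R | exists y c, eigen y c /\ r = pr c - nrm (x - y)].
Definition ext x := sup (ext_set x).

Lemma has_sup_ext_set x : has_sup (ext_set x).
Proof.
split; first by exists (pr 0 - nrm (x - 0)); exists 0, 0; split=> //; apply: eigen0.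
exists (nrm x) => _ [y [c [yc ->]]].
have := pr_le c; have := eigen_bound yc; have := nrm_distD y x 0; rewrite !subr0 nrm_distC.
lra.
Qed.

Lemma ext_eigen y c : eigen y c -> ext y = pr c.
Proof.
move=> yc; apply/eqP; rewrite eq_le; apply/andP; split.
  apply: ge_sup; first by case: (has_sup_ext_set y).
  move=> _ [y' [c' [y'c' ->]]]; have := eigen_bound (eigenB y'c' yc).
  by have := pr_le (c' - c); rewrite prB nrm_distC; lra.
apply: sup_upper_bound; first exact: has_sup_ext_set.
by exists y, c; rewrite subrr nrm0 subr0.
Qed.

Lemma ext_lip x x' : ext x <= ext x' + nrm (x - x').
Proof.
apply: ge_sup; first by case: (has_sup_ext_set x).
move=> _ [y [c [yc ->]]].
have : pr c - nrm (x' - y) <= ext x'.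
  by apply: sup_upper_bound; [exact: has_sup_ext_set|exists y, c].
by have := nrm_distD x' x y; rewrite (nrm_distC x' x); lra.
Qed.

End Extension.

Definition chr x := ext (@complex.Re R) x +i* ext (@complex.Im R) x.

Lemma chr_eigen y c : eigen y c -> chr y = c.
Proof.
move=> yc; rewrite /chr (ext_eigen (@ReB R) (@Re_le_normc R) yc).
by rewrite (ext_eigen (@ImB R) (@Im_le_normc R) yc); case: c {yc}.
Qed.

Lemma chr_lip x x' : normc (chr x - chr x') <= 2 * nrm (x - x').
Proof.
set re := ext (@complex.Re R); set im := ext (@complex.Im R).
have -> : chr x - chr x' = (re x - re x') +i* (im x - im x') by [].
apply: (le_trans (normc_le_Re_Im _ _)).
have lipRe := ext_lip (@Re_le_normc R); have lipIm := ext_lip (@Im_le_normc R).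
have dRe : `|re x - re x'| <= nrm (x - x').
  rewrite ler_norml; have := lipRe x x'; have := lipRe x' x.
  by rewrite (nrm_distC x') -/re; move=> h1 h2; apply/andP; split; lra.
have dIm : `|im x - im x'| <= nrm (x - x').
  rewrite ler_norml; have := lipIm x x'; have := lipIm x' x.
  by rewrite (nrm_distC x') -/im; move=> h1 h2; apply/andP; split; lra.
lra.
Qed.

Lemma chrD x x' : near_alg x -> near_alg x' -> chr (x + x') = chr x + chr x'.
Proof.
move=> nx nx'; apply/eqP; rewrite -subr_eq0; apply/eqP; apply: normc_eq0_le => e e0.
have e8 : 0 < e / 8 by rewrite divr_gt0.
have [y /eigen_alg [c yc] xy] := nx _ e8; have [y' /eigen_alg [c' y'c'] xy'] := nx' _ e8.
have chr_yy' : chr (y + y') = chr y + chr y'.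
  by rewrite (chr_eigen (eigenD yc y'c')) (chr_eigen yc) (chr_eigen y'c').
have -> : chr (x + x') - (chr x + chr x') =
    (chr (x + x') - chr (y + y')) - (chr x - chr y) - (chr x' - chr y').
  by rewrite chr_yy'; ring.
have := normcB_le (chr (x + x') - chr (y + y') - (chr x - chr y)) (chr x' - chr y').
have := normcB_le (chr (x + x') - chr (y + y')) (chr x - chr y).
have := chr_lip (x + x') (y + y'); have := chr_lip x y; have := chr_lip x' y'.
by have := nrm_distDD x x' y y'; lra.
Qed.

Lemma chrZ k x : near_alg x -> chr (k *: x) = k * chr x.
Proof.
move=> nx; apply/eqP; rewrite -subr_eq0; apply/eqP; apply: normc_eq0_le => e e0.
have e4 : 0 < e / 4 by rewrite divr_gt0.
have k0 := normc_ge0 k.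
have [y /eigen_alg [c yc] xy] := nx _ (divr_gt0 e4 (ltr_wpDl k0 ltr01)).
have chr_ky : chr (k *: y) = k * chr y by rewrite (chr_eigen (eigenZ k yc)) (chr_eigen yc).
have -> : chr (k *: x) - k * chr x = (chr (k *: x) - chr (k *: y)) - k * (chr x - chr y).
  by rewrite chr_ky; ring.
have := normcB_le (chr (k *: x) - chr (k *: y)) (k * (chr x - chr y)).
rewrite Normc.normcM; have := chr_lip (k *: x) (k *: y); rewrite -scalerBr nrmZ.
have := ler_wpM2l k0 (chr_lip x y).
by have := mul_le_of_lt_div k0 (nrm_ge0 _) xy; lra.
Qed.

Lemma chrM x x' : near_alg x -> near_alg x' -> chr (x ** x') = chr x * chr x'.
Proof.
move=> nx nx'; apply/eqP; rewrite -subr_eq0; apply/eqP; apply: normc_eq0_le => e e0.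
have e4 : 0 < e / 4 by rewrite divr_gt0.
have e8 : 0 < e / 8 by rewrite divr_gt0.
have a0 : 0 <= nrm x + normc (chr x) by rewrite addr_ge0 ?nrm_ge0 ?normc_ge0.
have [y' /eigen_alg [c' y'c'] xy'] := nx' _ (divr_gt0 e4 (ltr_wpDl a0 ltr01)).
have [y /eigen_alg [c yc] xy] := nx _ (divr_gt0 e8 (ltr_wpDl (nrm_ge0 y') ltr01)).
have chr_yy' : chr (y ** y') = chr y * chr y'.
  by rewrite (chr_eigen (eigenM yc y'c')) (chr_eigen yc) (chr_eigen y'c').
have -> : chr (x ** x') - chr x * chr x' = (chr (x ** x') - chr (y ** y'))
    + (chr y - chr x) * chr y' + chr x * (chr y' - chr x').
  by rewrite chr_yy'; ring.
set z1 := chr (x ** x') - _; set z2 := (_ - _) * _; set z3 := chr x * _.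
have z123 : normc (z1 + z2 + z3) <= normc z1 + normc z2 + normc z3.
  by apply: (le_trans (le_normcD _ _)); rewrite lerD2r; apply: le_normcD.
have z1_le : normc z1 <= 2 * (nrm x * nrm (x' - y') + nrm (x - y) * nrm y').
  by apply: (le_trans (chr_lip _ _)); rewrite ler_pM2l //; apply: nrm_distM.
have z2_le : normc z2 <= 2 * nrm (x - y) * nrm y'.
  rewrite /z2 Normc.normcM; apply: ler_pM; rewrite ?normc_ge0 //.
    by rewrite nrm_distC; apply: chr_lip.
  by rewrite (chr_eigen y'c'); apply: eigen_bound.
have z3_le : normc z3 <= normc (chr x) * (2 * nrm (x' - y')).
  by rewrite /z3 Normc.normcM ler_wpM2l ?normc_ge0 // nrm_distC chr_lip.
have := mul_le_of_lt_div a0 (nrm_ge0 _) xy'; rewrite mulrDl.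
by have := mul_le_of_lt_div (nrm_ge0 y') (nrm_ge0 _) xy; lra.
Qed.

Lemma lip_char_chr : lip_char chr.
Proof.
split; last exact: chr_lip.
split=> [a b Ca Cb|k a Ca|a b Ca Cb|].
- by apply: chrD; apply: Cstar_gen_near_alg.
- by apply: chrZ; apply: Cstar_gen_near_alg.
- by apply: chrM; apply: Cstar_gen_near_alg.
- exists x0; split=> //; have x0x0 : x0 ** x0 = 1 *: x0 by rewrite x0_id scale1r.
  by rewrite (chr_eigen (eigen_x0 x0x0)); apply/eqP/oner_neq0.
Qed.

End Maximal.

Lemma lip_char_exists : exists phi,
  lip_char phi /\ forall y c, x0 ** y = c *: x0 -> phi y = c.
Proof.
have [L [L_cons L_max]] := maximal_consistent_exists.
exists (chr L); split; first exact: lip_char_chr L_cons L_max.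
by move=> y c /(eigen_x0 L)/(chr_eigen L_cons L_max).
Qed.

End CharacterOfProjection.

(** * Elements with integer Gelfand transform *)

Lemma char0 phi : is_character mul CE phi -> phi 0 = 0.
Proof.
case=> _ phiZ _ _; have C0 : CE 0 by move=> S _ S0.
by rewrite -(scale0r (0 : A)) phiZ // mul0r.
Qed.

Lemma char_ring_gen_int phi x : is_character mul CE phi ->
  ring_gen mul E x -> exists n : int, phi x = n%:~R.
Proof.
move=> phi_char; have [phiD phiZ phiM _] := phi_char.
elim=> [i||y ry [n phin]|y z ry [n phin] rz [m phim]|y z ry [n phin] rz [m phim]].
- have CEi := ring_gen_Cstar_gen (rg_gen mul E i).
  have /eqP : phi (E i) * phi (E i) = phi (E i) by rewrite -phiM // E_id.
  rewrite -subr_eq0 -[X in _ - X]mulr1 -mulrBr mulf_eq0 subr_eq0.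
  by case/orP => /eqP ->; [exists 0|exists 1].
- by exists 0; rewrite char0.
- exists (- n); rewrite -scaleN1r phiZ ?phin ?mulN1r ?intrN //.
  exact: ring_gen_Cstar_gen.
- by exists (n + m); rewrite phiD ?phin ?phim ?intrD //; apply: ring_gen_Cstar_gen.
- by exists (n * m); rewrite phiM ?phin ?phim ?intrM //; apply: ring_gen_Cstar_gen.
Qed.

Lemma lip_char_atoms F d bs : bs \in sign_patterns (size F) -> atom F bs != 0 ->
  exists2 phi, lip_char phi & phi (atoms F d) = d bs.
Proof.
move=> bsF /eqP atom_neq0.
have [phi [lphi phiP]] := lip_char_exists atom_neq0 (commE_atom F bs) (atom_id F bs)
  (ring_gen_Cstar_gen (ring_gen_atom F bs)).
by exists phi => //; apply/phiP/mul_atoms.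
Qed.

Lemma approx_atoms x e : CE x -> 0 < e -> exists F d, nrm (x - atoms F d) < e.
Proof.
move=> Cx e0; have [y [F Fy] xy] := Cstar_gen_near_alg Cx e0.
by have [d yd] := fin_alg_atoms Fy; exists F, d; rewrite -yd.
Qed.

(* Each coefficient of a combination of atoms near [x] is the value of a
   character at it, hence small. *)
Lemma lip_chars_separate x : CE x -> (forall phi, lip_char phi -> phi x = 0) -> x = 0.
Proof.
move=> Cx phix; apply: nrm_eq0; apply/eqP; rewrite eq_le nrm_ge0 andbT leNgt.
apply/negP => x0; have e0 : 0 < nrm x / 6 by rewrite divr_gt0.
have [F [d xd]] := approx_atoms Cx e0.
have : nrm (atoms F d) <= 2 * (nrm x / 6).
  apply: nrm_atoms_le => [|bs bsF nz]; first by rewrite mulr_ge0 // ltW.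
  have [phi [phi_char phi_lip] phid] := lip_char_atoms d bsF nz.
  by have := phi_lip (atoms F d) x; rewrite phid phix // subr0 nrm_distC; lra.
by have := nrm_distD x (atoms F d) 0; rewrite !subr0; lra.
Qed.

(* [r] rounds the coefficients of a combination of atoms 1/8-close to [a]. *)
Lemma C0_int_near_ring_gen a : C0_int mul st nrm E a ->
  exists2 r, ring_gen mul E r & nrm (a - r) < 2^-1.
Proof.
move=> [Ca a_int]; have e0 : 0 < 8^-1 :> R by rewrite invr_gt0.
have [F [d ad]] := approx_atoms Ca e0.
have : forall bs, exists n : int, bs \in sign_patterns (size F) -> atom F bs != 0 ->
    normc (d bs - n%:~R) <= 4^-1.
  move=> bs; have [bsF|] := boolP (bs \in sign_patterns (size F)); last by exists 0.
  have [nz|] := boolP (atom F bs != 0); last by exists 0.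
  have [phi [phi_char phi_lip] phid] := lip_char_atoms d bsF nz.
  have [n phin] := a_int phi phi_char; exists n => _ _.
  by have := phi_lip (atoms F d) a; rewrite phid phin nrm_distC; lra.
case/choice => n nP; exists (atoms F (fun bs => (n bs)%:~R)).
  exact: ring_gen_atoms_int.
have : nrm (atoms F d - atoms F (fun bs => (n bs)%:~R)) <= 4^-1.
  by rewrite combB; apply: nrm_atoms_le => [|bs]; [rewrite invr_ge0|apply: nP].
by have := nrm_distD a (atoms F d) (atoms F (fun bs => (n bs)%:~R)); lra.
Qed.

Lemma C0_int_ring_gen a : C0_int mul st nrm E a -> ring_gen mul E a.
Proof.
move=> a_int; have [r rr ar] := C0_int_near_ring_gen a_int.
suff : a - r = 0 by move/eqP; rewrite subr_eq0 => /eqP ->.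
have Cr := ring_gen_Cstar_gen rr.
apply: lip_chars_separate => [|phi [phi_char phi_lip]].
  by apply: Cstar_genD; [case: a_int|rewrite -scaleN1r; apply: Cstar_genZ].
have [phiD phiZ _ _] := phi_char.
have [n phin] := a_int.2 phi phi_char; have [m phim] := char_ring_gen_int phi_char rr.
have phiar : phi (a - r) = (n - m)%:~R.
  rewrite -scaleN1r phiD ?phiZ ?phin ?phim ?mulN1r ?intrB //; first by case: a_int.
  exact: Cstar_genZ.
have [nm0|nm] := eqVneq (n - m) 0; first by rewrite phiar nm0.
have small : 2 * nrm (a - r) < 1 by lra.
have := phi_lip (a - r) 0; rewrite char0 // !subr0 phiar.
by move=> /(le_trans (@normc_int_ge1 R _ nm)); rewrite leNgt small.
Qed.

Lemma ring_gen_C0_int a : ring_gen mul E a -> C0_int mul st nrm E a.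
Proof.
by move=> ra; split=> [|phi phi_char]; [apply: ring_gen_Cstar_gen|apply: char_ring_gen_int].
Qed.

Lemma Zspan_ring_gen a : Zspan E a -> ring_gen mul E a.
Proof.
case=> s ->; elim: s => [|p s IH]; first by rewrite big_nil; apply: rg_0.
by rewrite big_cons; apply: rg_add => //; apply/ring_gen_mulz/rg_gen.
Qed.

Lemma mulm_mulz x y (n m : int) : (x *~ n) ** (y *~ m) = (x ** y) *~ (n * m).
Proof.
by rewrite -(scaler_int n) -(scaler_int m) -(scaler_int (n * m)) mulmZl mulmZr scalerA intrM mulrC.
Qed.

Lemma ring_gen_Zspan (E_mul : forall i j, exists k, E i ** E j = E k) a :
  ring_gen mul E a -> Zspan E a.
Proof.
have : forall ij : I * I, exists k, E ij.1 ** E ij.2 = E k by move=> [i j]; apply: E_mul.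
case/choice => k Ek.
elim=> [i||x _ [s ->]|x y _ [s ->] _ [t ->]|x y _ [s ->] _ [t ->]].
- by exists [:: (1, i)]; rewrite big_seq1.
- by exists [::]; rewrite big_nil.
- exists [seq (- p.1, p.2) | p <- s].
  by rewrite big_map -sumrN; apply: eq_bigr => p _; rewrite mulrNz.
- by exists (s ++ t); rewrite big_cat.
- exists [seq (p.1 * q.1, k (p.2, q.2)) | p <- s, q <- t].
  rewrite big_allpairs_dep mulm_suml; apply: eq_bigr => p _.
  by rewrite mulm_sumr; apply: eq_bigr => q _; rewrite mulm_mulz (Ek (p.2, q.2)).
Qed.

End CommutingProjections.
End CstarAlgebra.

Theorem lemma4p3 (R : realType) (A : lmodType R[i])
    (mul : A -> A -> A) (st : A -> A) (nrm : A -> R)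
    (HA : is_Cstar_algebra mul st nrm)
    (I : Type) (E : I -> A)
    (Eproj : forall i, mul (E i) (E i) = E i /\ st (E i) = E i)
    (Ecomm : forall i j, mul (E i) (E j) = mul (E j) (E i)) :
  (forall a, C0_int mul st nrm E a <-> ring_gen mul E a) /\
  ((forall i j, exists k, mul (E i) (E j) = E k) ->
   forall a, C0_int mul st nrm E a <-> Zspan E a).
Proof.
have C0_ring a : C0_int mul st nrm E a <-> ring_gen mul E a.
  by split; [apply: (C0_int_ring_gen HA Eproj Ecomm)|apply: (ring_gen_C0_int nrm Eproj)].
split=> // E_mul a; rewrite C0_ring.
by split; [apply: (ring_gen_Zspan HA E_mul)|apply: (Zspan_ring_gen mul)].
Qed.
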